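(* Let $T$ be a tree on $n\ge3$ vertices and $k\ge2$ even. Then the order-$k$ Steiner distance hypermatrix $M$ of $T$ is conditionally strictly negative definite, i.e., $M(\mathbf{c},\ldots,\mathbf{c})<0$ for every nonzero $\mathbf{c}\in\mathbb{R}^n$ with $\sum_{i=1}^n c_i=0$.
   Context: $T$ is a tree with vertex set $\{1,\dots,n\}$. For $U\subseteq V(T)$, the Steiner distance $S(U)$ is the minimum number of edges of a connected subgraph of $T$ whose vertex set contains $U$. The order-$k$ Steiner distance hypermatrix $M$ has entries $M_{(i_1,\dots,i_k)}=S(\{i_1,\dots,i_k\})$, and $M(\mathbf{x}_1,\dots,\mathbf{x}_k)=\sum_{\mathbf{i}\in V(T)^k}M_{\mathbf{i}}\prod_{j=1}^k x_{j i_j}$. *)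

From HB Require Import structures.
From mathcomp Require Import all_boot all_order all_algebra.
Set Implicit Arguments. Unset Strict Implicit. Unset Printing Implicit Defensive.
Import Order.TTheory GRing.Theory Num.Theory.

Definition simple_graph (n : nat) (e : rel 'I_n) : Prop :=
  symmetric e /\ irreflexive e.

Definition acyclic (n : nat) (e : rel 'I_n) : Prop :=
  forall c : seq 'I_n, uniq c -> 3 <= size c -> ~~ cycle e c.

Definition is_tree (n : nat) (e : rel 'I_n) : Prop :=
  [/\ simple_graph e, (forall x y, connect e x y) & acyclic e].

(* A subgraph (W, F) of the graph e: F is a set of edges {x,y} of e with both
   endpoints in W; it is connected if any two vertices of W are joined by a
   path using only edges of F (such paths automatically stay in W). *)
Definition subgraph_edge (n : nat) (F : {set {set 'I_n}}) : rel 'I_n :=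
  fun a b => [set a; b] \in F.

Definition connected_subgraph (n : nat) (e : rel 'I_n)
    (W : {set 'I_n}) (F : {set {set 'I_n}}) : bool :=
  [forall f in F, exists x, exists y, [&& e x y, x \in W, y \in W & f == [set x; y]]]
  && [forall x in W, forall y in W, connect (subgraph_edge F) x y].

Definition steiner_adm (n : nat) (e : rel 'I_n) (U : {set 'I_n})
    (p : {set 'I_n} * {set {set 'I_n}}) : bool :=
  (U \subset p.1) && connected_subgraph e p.1 p.2.

(* The default value #|{set 'I_n}| bounds every #|F| from above, so it never
   affects the minimum when an admissible subgraph exists (always, in a
   connected graph). *)
Definition steiner (n : nat) (e : rel 'I_n) (U : {set 'I_n}) : nat :=
  \big[minn/#|[set: {set 'I_n}]|]_(p : {set 'I_n} * {set {set 'I_n}} | steiner_adm e U p)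
    #|p.2|.

(* M(c,...,c) for the order-k Steiner distance hypermatrix:
   sum over i in V^k of S({i_1,...,i_k}) * prod_j c_{i_j}. *)
Definition steiner_form (R : numDomainType) (n k : nat) (e : rel 'I_n)
    (c : 'cV[R]_n) : R :=
  \sum_(i : {ffun 'I_k -> 'I_n})
    ((steiner e [set i j | j : 'I_k])%:R * \prod_(j < k) c (i j) 0)%R.

From HB Require Import structures.
From mathcomp Require Import all_boot all_order all_algebra.
Set Implicit Arguments. Unset Strict Implicit. Unset Printing Implicit Defensive.
Import Order.TTheory GRing.Theory Num.Theory.
Local Open Scope ring_scope.

(* Deleting an edge xy of the tree splits its vertices into the side of x and
   the side of y. Every connected subgraph whose vertex set contains U uses each
   edge both of whose sides meet U, and these edges alone already form such a
   subgraph, so S(U) is their number. Summing edge by edge, the words i in V^k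
   meeting both sides of xy contribute (sum c)^k - a_xy^k - a_yx^k, where a_xy is
   the sum of c over the side of x. When sum c = 0 and k is even this gives
   M(c,...,c) = - sum_xy (a_xy^k + a_yx^k) <= 0, and equality forces every side
   sum to vanish, hence c = 0, since the sides (away from v) of the edges at a
   vertex v partition the remaining vertices. *)

Lemma set2_eq (T : finType) (s t x y : T) : [set s; t] = [set x; y] ->
  (s = x /\ t = y) \/ (s = y /\ t = x).
Proof.
move=> E.
have hs : s \in [set x; y] by rewrite -E set21.
have ht : t \in [set x; y] by rewrite -E set22.
have hx : x \in [set s; t] by rewrite E set21.
have hy : y \in [set s; t] by rewrite E set22.
move: hs ht hx hy; rewrite !inE.
case/orP=> /eqP hs; case/orP=> /eqP ht; rewrite hs ht ?orbb.
- by move=> _ /eqP ->; left.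
- by left.
- by right.
- by move=> /eqP -> _; left.
Qed.

Lemma bigminn_attained (I : finType) (P : pred I) (F : I -> nat) t i0 :
  P i0 -> (F i0 <= t)%N -> (forall i, P i -> F i0 <= F i)%N ->
  \big[minn/t]_(i | P i) F i = F i0.
Proof.
move=> Pi0 le_t le_F; apply/eqP; rewrite eqn_leq; apply/andP; split; last first.
  by apply: (big_ind (leq (F i0))) => // a b; rewrite leq_min => -> ->.
have : i0 \in index_enum I by rewrite mem_index_enum.
elim: (index_enum I) => [//|j r IH]; rewrite inE big_cons => /orP[/eqP<-|/IH le_r].
  by rewrite Pi0 geq_minl.
by case: ifP => _ //; rewrite (leq_trans (geq_minr _ _)).
Qed.

Lemma subgraph_edge_csym (n : nat) (F : {set {set 'I_n}}) :
  connect_sym (subgraph_edge F).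
Proof. by apply: sym_connect_sym => a b; rewrite /subgraph_edge setUC. Qed.

Lemma exists_in_imset (I T : finType) (f : I -> T) (P : pred T) :
  [exists u in [set f j | j : I], P u] = [exists j, P (f j)].
Proof.
apply/exists_inP/existsP => [[_ /imsetP[j _ ->] Pfj]|[j Pfj]]; first by exists j.
by exists (f j); rewrite ?imset_f.
Qed.

Lemma even_exprD_eq0 (R : realDomainType) (a b : R) k : ~~ odd k -> (0 < k)%N ->
  (a ^+ k + b ^+ k == 0) = (a == 0) && (b == 0).
Proof.
by move=> evk k_gt0; rewrite paddr_eq0 ?exprn_even_ge0 // !expf_eq0 k_gt0.
Qed.

Section FfunExpansion.
Variables (R : comPzRingType) (T : finType) (k : nat).

Lemma sum_ffun_prod (f : T -> R) :
  \sum_(i : {ffun 'I_k -> T}) \prod_(j < k) f (i j) = (\sum_v f v) ^+ k.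
Proof.
by rewrite -(bigA_distr_bigA (fun _ : 'I_k => f)) prodr_const card_ord.
Qed.

Lemma sum_ffun_prod_all (A : pred T) (f : T -> R) :
  \sum_(i : {ffun 'I_k -> T} | [forall j, A (i j)]) \prod_(j < k) f (i j) =
  (\sum_(v | A v) f v) ^+ k.
Proof.
rewrite [in RHS]big_mkcond -(sum_ffun_prod (fun v => if A v then f v else 0)).
rewrite big_mkcond; apply: eq_bigr => i _ /=.
case: ifPn => [/forallP Ai|/forallPn[j Aj]]; first by apply: eq_bigr => j _; rewrite Ai.
by rewrite (bigD1 j) //= (negPf Aj) mul0r.
Qed.

Lemma sum_ffun_prod_split (A : pred T) (f : T -> R) : (0 < k)%N ->
  \sum_(i : {ffun 'I_k -> T} | [exists j, A (i j)] && [exists j, ~~ A (i j)])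
     \prod_(j < k) f (i j) =
  (\sum_v f v) ^+ k - (\sum_(v | A v) f v) ^+ k - (\sum_(v | ~~ A v) f v) ^+ k.
Proof.
move=> k_gt0; rewrite -sum_ffun_prod -!sum_ffun_prod_all.
rewrite [X in X - _ - _](bigID (fun i : {ffun 'I_k -> T} => [forall j, A (i j)])) /=.
rewrite [X in _ + X - _ - _](bigID (fun i : {ffun 'I_k -> T} =>
  [forall j, ~~ A (i j)])) /=.
have allN (i : {ffun 'I_k -> T}) :
    ~~ [forall j, A (i j)] && [forall j, ~~ A (i j)] = [forall j, ~~ A (i j)].
  by apply: andb_idl => /forallP nA; apply/forallPn; exists (Ordinal k_gt0); apply: nA.
have mixed (i : {ffun 'I_k -> T}) :
    ~~ [forall j, A (i j)] && ~~ [forall j, ~~ A (i j)] =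
    [exists j, A (i j)] && [exists j, ~~ A (i j)].
  rewrite !negb_forall andbC; congr (_ && _).
  by apply: eq_existsb => j; rewrite negbK.
rewrite (eq_bigl _ _ allN) (eq_bigl _ _ mixed).
by rewrite [_ + (_ + _)]addrC addrK addrC addKr.
Qed.

End FfunExpansion.

Section Tree.
Variables (n : nat) (e : rel 'I_n).
Hypotheses (esym : symmetric e) (eirr : irreflexive e).
Hypotheses (econ : forall x y, connect e x y) (eacy : acyclic e).

Definition del_edge (f : {set 'I_n}) : rel 'I_n :=
  fun s t => e s t && ([set s; t] != f).

Definition del_verts (S : seq 'I_n) : rel 'I_n :=
  fun s t => [&& e s t, s \notin S & t \notin S].

Definition side (x y : 'I_n) : pred 'I_n := connect (del_edge [set x; y]) x.

Lemma del_edge_csym f : connect_sym (del_edge f).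
Proof. by apply: sym_connect_sym => s t; rewrite /del_edge esym setUC. Qed.

Lemma del_verts_csym S : connect_sym (del_verts S).
Proof.
by apply: sym_connect_sym => s t; rewrite /del_verts esym (andbC (s \notin S)).
Qed.

Lemma del_edge_sub f : subrel (del_edge f) e.
Proof. by move=> s t /andP[]. Qed.

Lemma del_verts_edge S (f : {set 'I_n}) y :
  y \in S -> y \in f -> subrel (del_verts S) (del_edge f).
Proof.
move=> yS yf s t /and3P[est sS tS]; rewrite /del_edge est; apply/eqP => stf.
by move: yS yf; rewrite -stf => /[swap] /set2P[] ->; rewrite ?(negPf sS) ?(negPf tS).
Qed.

Lemma del_verts_sub S S' :
  {subset S <= S'} -> subrel (del_verts S') (del_verts S).
Proof.
move=> SS' s t /and3P[est sS' tS']; rewrite /del_verts est.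
by rewrite (contra (SS' s)) // (contra (SS' t)).
Qed.

Lemma path_del_verts S a q :
  path e a q -> {in a :: q, forall s, s \notin S} -> path (del_verts S) a q.
Proof.
elim: q a => [//|b q IH] a /= /andP[eab pq] qS.
rewrite /del_verts eab !qS ?inE ?eqxx ?orbT //=.
by apply: IH => // s sq; apply: qS; rewrite inE sq orbT.
Qed.

Lemma path_del_edge (f : {set 'I_n}) a b q :
  path e a q -> b \notin a :: q -> b \in f -> path (del_edge f) a q.
Proof.
move=> pq bq bf; apply: (sub_path (del_verts_edge (mem_head b [::]) bf)).
by apply: path_del_verts => // s sq; rewrite inE; apply: contraNneq bq => <-.
Qed.

Lemma side_notin x y : e x y -> ~~ side x y y.
Proof.
move=> exy; apply/negP => /connectP[p pp].
case: (shortenP pp) => {pp}p pp up _ ly; subst y.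
have ep := sub_path (@del_edge_sub _) pp.
case: p pp up exy ep => [|a [|b r]] /=.
- by rewrite eirr.
- by rewrite /del_edge eqxx andbF.
- move=> _ up exy ep; have := eacy (c := [:: x, a, b & r]) up isT.
  by rewrite /cycle rcons_path /= ep /= esym exy.
Qed.

Lemma side_cover x y z : e x y -> side x y z || side y x z.
Proof.
move=> exy; have /connectP[p pp ->] := econ x z.
elim/last_ind: p pp => [|p b IH]; first by rewrite /side connect0.
rewrite rcons_path last_rcons => /andP[/IH sides eb].
have [/eqP E | NE] := boolP ([set last x p; b] == [set x; y]).
  have : b \in [set x; y] by rewrite -E set22.
  by case/set2P => ->; rewrite /side connect0 ?orbT.
have ab f : [set last x p; b] != f -> del_edge f (last x p) b.
  by rewrite /del_edge eb.
case/orP: sides => [sx|sy]; apply/orP; [left|right].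
  exact: connect_trans sx (connect1 (ab _ NE)).
by apply: connect_trans sy (connect1 (ab _ _)); rewrite [[set y; x]]setUC.
Qed.

Lemma sideC x y z : e x y -> side y x z = ~~ side x y z.
Proof.
move=> exy; apply/idP/idP => [syz|]; last by move: (side_cover z exy) => /orP[->|].
apply/negP => sxz; apply/negP: (side_notin exy).
rewrite /side (connect_trans sxz) // del_edge_csym.
by move: syz; rewrite /side setUC.
Qed.

Lemma exists_nbr_side v z : z != v -> exists2 w, e v w & side w v z.
Proof.
move=> zv; have /connectP[p pp zE] := econ v z.
case: (shortenP pp) zE => {pp}[[|w q]] /= pp up _ zE; first by rewrite zE eqxx in zv.
case/andP: pp => evw pq; exists w => //; apply/connectP; exists q => //.
by apply: (path_del_edge (b := v)) => //; [case/andP: up | exact: set22].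
Qed.

Lemma nbr_side_uniq v w w' z :
  e v w -> e v w' -> side w v z -> side w' v z -> w = w'.
Proof.
move=> evw evw' swz /connectP[q pq zE]; apply/eqP; apply: contraTT swz => ww'.
rewrite (sideC z evw) negbK; apply/connectP; exists (w' :: q) => //=.
rewrite /del_edge evw' /=; apply/andP; split.
  apply/eqP => E; have : w' \in [set v; w] by rewrite -E set22.
  by case/set2P=> [w'v|w'w]; [rewrite w'v eirr in evw' | rewrite w'w eqxx in ww'].
apply: (path_del_edge (b := v) _ _ (set21 v w)).
  exact: (sub_path (@del_edge_sub _) pq).
by apply/negP => /(path_connect pq); apply/negP/side_notin; rewrite esym.
Qed.

Lemma sum_nbr_sides (R : nmodType) (f : 'I_n -> R) v :
  \sum_(w | e v w) \sum_(z | side w v z) f z = \sum_(z | z != v) f z.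
Proof.
rewrite (exchange_big_dep predT) //= [RHS]big_mkcond; apply: eq_bigr => z _.
have [->|zv] := eqVneq z v.
  apply: big_pred0 => w; apply/andP => -[evw].
  by apply/negP/side_notin; rewrite esym.
have [w0 evw0 sw0] := exists_nbr_side zv.
rewrite (big_pred1 w0) // => w; apply/andP/eqP => [[evw sw]|->] //.
exact: nbr_side_uniq evw evw0 sw sw0.
Qed.

Lemma side_sums_eq0 (R : nmodType) (f : 'I_n -> R) :
  \sum_v f v = 0 -> (forall x y, e x y -> \sum_(z | side x y z) f z = 0) ->
  forall v, f v = 0.
Proof.
move=> f0 sides0 v; move: f0; rewrite (bigD1 v) //= -sum_nbr_sides big1 ?addr0 //.
by move=> w evw; apply: sides0; rewrite esym.
Qed.

Lemma path_sides x p z :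
    path e x p -> uniq (x :: p) -> connect (del_verts p) z x ->
  path [rel a b | [&& e a b, side a b z & side b a (last x p)]] x p.
Proof.
elim: p x => [//|y q IH] x /= /andP[exy pq] /andP[xNyq uq] zx.
have [xNq yNq] : x \notin q /\ y \notin q.
  by move: xNyq uq; rewrite inE negb_or => /andP[_ ->] /andP[->].
apply/andP; split.
  apply/and3P; split=> //.
    rewrite /side del_edge_csym; apply: connect_sub zx => s t st; apply: connect1.
    exact: del_verts_edge (mem_head y q) (set22 x y) _ _ st.
  by apply/connectP; exists q => //; apply: (path_del_edge _ _ (set22 y x)).
apply: IH => //; apply: (connect_trans (connect_sub _ zx)).
  move=> s t st; apply: connect1.
  by apply: del_verts_sub _ _ st => s' sq; rewrite inE sq orbT.
by apply: connect1; rewrite /del_verts exy xNq.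
Qed.

Definition separates (U : {set 'I_n}) x y :=
  [&& e x y, [exists u in U, side x y u] & [exists u in U, side y x u]].

Definition cut_pairs (U : {set 'I_n}) :=
  [set p : 'I_n * 'I_n | (p.1 < p.2)%N && separates U p.1 p.2].

Definition cut_edges (U : {set 'I_n}) := [set [set p.1; p.2] | p in cut_pairs U].

Lemma separatesC U x y : separates U x y = separates U y x.
Proof. by rewrite /separates esym (andbC [exists u in U, side x y u]). Qed.

Lemma separates_cut_edge U x y : separates U x y -> [set x; y] \in cut_edges U.
Proof.
move=> sepU; have exy : e x y by case/andP: sepU.
case: (ltngtP x y) => [xy|yx|/val_inj xy]; last by rewrite xy eirr in exy.
  by apply/imsetP; exists (x, y); rewrite // inE xy.
by apply/imsetP; exists (y, x); [rewrite inE /= yx separatesC | rewrite /= setUC].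
Qed.

Lemma card_cut_edges U : #|cut_edges U| = #|cut_pairs U|.
Proof.
apply: card_in_imset => -[a b] [a' b']; rewrite !inE /= => /andP[ab _] /andP[ab' _].
case/set2_eq => [[-> ->] //|[aE bE]].
by rewrite bE in ab; move: (ltn_trans ab ab'); rewrite aE ltnn.
Qed.

Lemma path_cut_edges (U : {set 'I_n}) x p z : z \in U -> last x p \in U ->
    path e x p -> uniq (x :: p) -> connect (del_verts p) z x ->
  path (subgraph_edge (cut_edges U)) x p.
Proof.
move=> zU lU pp up zx.
apply: sub_path (path_sides pp up zx) => a b /and3P[eab sz sl].
apply: separates_cut_edge; rewrite /separates eab /=.
by apply/andP; split; apply/exists_inP; [exists z | exists (last x p)].
Qed.

Lemma connect_cut_edges (U : {set 'I_n}) u w :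
  u \in U -> w \in U -> connect (subgraph_edge (cut_edges U)) u w.
Proof.
move=> uU wU; have /connectP[p pp wE] := econ u w.
case: (shortenP pp) wE => {pp}p pp up _ wE; apply/connectP; exists p => //.
by apply: (path_cut_edges uU) => //; rewrite -wE.
Qed.

Lemma connect_cut_edge_end U x y : separates U x y ->
  exists2 u, u \in U & connect (subgraph_edge (cut_edges U)) x u.
Proof.
case/and3P => exy /exists_inP[u uU /connectP[p pp uE]] /exists_inP[w wU syw].
case: (shortenP pp) uE => {pp}p pp up _ uE.
have sxp : {in x :: p, forall s, side x y s} := path_connect pp.
exists u => //; apply/connectP; exists p => //.
suff /andP[] : path (subgraph_edge (cut_edges U)) y (x :: p) by [].
apply: (path_cut_edges wU); rewrite /= -?uE //.
- by rewrite esym exy (sub_path (@del_edge_sub _) pp).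
- by apply/andP; split; [apply: contra (side_notin exy) => /sxp | exact: up].
rewrite del_verts_csym; move: syw => /connectP[q pq wE].
apply/connectP; exists q => //.
apply: path_del_verts; first exact: (sub_path (@del_edge_sub _) pq).
move=> s /(path_connect pq) sys; apply/negP => /sxp sxs.
by move: sys; rewrite -/(side y x s) (sideC s exy) sxs.
Qed.

Lemma mem_cover_cut_edges (U : {set 'I_n}) a :
  a \in U :|: cover (cut_edges U) ->
  exists2 u, u \in U & connect (subgraph_edge (cut_edges U)) a u.
Proof.
case/setUP => [aU|/bigcupP[_ /imsetP[[x y] + ->] /set2P[] ->]].
- by exists a => //; apply: connect0.
- by rewrite inE => /andP[_ /connect_cut_edge_end].
- by rewrite inE separatesC => /andP[_ /connect_cut_edge_end].
Qed.

Lemma steiner_adm_cut_edges U :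
  steiner_adm e U (U :|: cover (cut_edges U), cut_edges U).
Proof.
apply/and3P; split=> /=; first exact: subsetUl.
  apply/forall_inP => f fF; have /imsetP[[x y] + fE] := fF.
  rewrite inE /= => /andP[_ /and3P[exy _ _]].
  have inW a : a \in f -> a \in U :|: cover (cut_edges U).
    by move=> af; apply/setUP; right; apply/bigcupP; exists f.
  apply/existsP; exists x; apply/existsP; exists y.
  by rewrite exy fE eqxx !inW ?fE ?set21 ?set22.
apply/forall_inP => a /mem_cover_cut_edges[u uU au].
apply/forall_inP => b /mem_cover_cut_edges[w wU bw].
apply: connect_trans au (connect_trans (connect_cut_edges uU wU) _).
by rewrite subgraph_edge_csym.
Qed.

Lemma cut_edges_min U W F : steiner_adm e U (W, F) -> cut_edges U \subset F.
Proof.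
case/and3P => /= /subsetP UW /forall_inP Fedges /forall_inP Fconn.
apply/subsetP => _ /imsetP[[x y] + ->]; rewrite inE /= => /andP[_ /and3P[exy]].
case/exists_inP => u uU sxu /exists_inP[w wU syw]; apply: contraT => xyNF.
have /(connect_trans sxu) sxw : connect (del_edge [set x; y]) u w.
  move/forall_inP: (Fconn u (UW u uU)) => /(_ w (UW w wU)).
  apply: connect_sub => s t st; apply: connect1; apply/andP; split.
    have /existsP[s' /existsP[t' /and4P[es't' _ _ /eqP/set2_eq]]] := Fedges _ st.
    by case=> -[-> ->]; rewrite // esym.
  by apply: contraNneq xyNF => <-.
by move: syw; rewrite (sideC w exy) => /negP[].
Qed.

Lemma steinerE U : steiner e U = #|cut_pairs U|.
Proof.
rewrite -card_cut_edges /steiner.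
rewrite (bigminn_attained (i0 := (U :|: cover (cut_edges U), cut_edges U))) //.
- exact: steiner_adm_cut_edges.
- by rewrite cardsT max_card.
- by case=> W F /cut_edges_min /subset_leq_card.
Qed.

Lemma steiner_form_edges (R : numDomainType) k (c : 'cV[R]_n) : (0 < k)%N ->
  steiner_form k e c = \sum_(p : 'I_n * 'I_n | (p.1 < p.2)%N && e p.1 p.2)
    ((\sum_v c v 0) ^+ k - (\sum_(v | side p.1 p.2 v) c v 0) ^+ k
      - (\sum_(v | side p.2 p.1 v) c v 0) ^+ k).
Proof.
move=> k_gt0; rewrite /steiner_form.
under eq_bigr do rewrite steinerE -sum1_card natr_sum mulr_suml.
rewrite (exchange_big_dep predT) //= [RHS]big_mkcond; apply: eq_bigr => -[x y] _ /=.
case: ifPn => [/andP[xy exy]|not_edge]; last first.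
  apply: big_pred0 => i; rewrite inE.
  by apply: contraNF not_edge => /andP[-> /andP[->]].
rewrite (eq_bigl _ _ (fun z => sideC z exy)).
rewrite -(sum_ffun_prod_split (side x y) (fun v => c v 0) k_gt0).
apply: eq_big => [i|i _]; last by rewrite mul1r.
rewrite inE /= xy /separates exy !exists_in_imset /=; congr (_ && _).
by apply: eq_existsb => j; rewrite sideC.
Qed.
End Tree.

Theorem mainTheorem4 (R : realFieldType) (n k : nat) (e : rel 'I_n)
    (hT : is_tree e) (hn : (3 <= n)%N) (hk : (2 <= k)%N) (hkeven : ~~ odd k)
    (c : 'cV[R]_n) (hc : c != 0) (hsum : \sum_(i < n) c i 0 = 0) :
  steiner_form k e c < 0.
Proof.
case: hT => -[esym eirr] econ eacy; have k_gt0 : (0 < k)%N by apply: leq_trans hk.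
pose a x y := \sum_(v | side e x y v) c v 0.
have -> : steiner_form k e c =
    - \sum_(p : 'I_n * 'I_n | (p.1 < p.2)%N && e p.1 p.2)
        (a p.1 p.2 ^+ k + a p.2 p.1 ^+ k).
  rewrite steiner_form_edges // -sumrN; apply: eq_bigr => p _.
  by rewrite hsum expr0n gtn_eqF //= sub0r opprD.
have terms_ge0 (p : 'I_n * 'I_n) : 0 <= a p.1 p.2 ^+ k + a p.2 p.1 ^+ k.
  by rewrite addr_ge0 ?exprn_even_ge0.
rewrite oppr_lt0 lt0r sumr_ge0 ?andbT //; apply: contra hc => /eqP sum0.
have pair0 (p : 'I_n * 'I_n) :
    (p.1 < p.2)%N && e p.1 p.2 -> a p.1 p.2 = 0 /\ a p.2 p.1 = 0.
  move=> /(psumr_eq0P (fun p _ => terms_ge0 p) sum0)/eqP.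
  by rewrite even_exprD_eq0 // => /andP[/eqP ? /eqP ?].
apply/eqP/matrixP => v j; rewrite ord1 mxE.
apply: (side_sums_eq0 esym eirr econ eacy hsum) => x y exy.
case: (ltngtP x y) => [xy|yx|/val_inj xy]; last by rewrite xy eirr in exy.
- by case: (pair0 (x, y)); rewrite /= ?xy.
- by case: (pair0 (y, x)); rewrite /= ?yx 1?esym.
Qed.
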